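(* Let $\mathrm{M}=\langle e_1+I,\ e_2+I,\ A\rangle$, where $e_1,e_2$ are the standard basis vectors of $E^2$ and $A=\begin{pmatrix}0&1\\1&0\end{pmatrix}$ transposes $e_1$ and $e_2$. Then the Lie group $\mathrm{Sym}(\mathrm{M})$ is isomorphic to $\mathrm{O}(2)$, $\mathrm{Sym}(\mathrm{M})=\mathrm{Aff}(\mathrm{M})$, and $\Omega:\mathrm{Aff}(\mathrm{M})\to\mathrm{Out}(\mathrm{M})$ maps the subgroup $\{\mathrm{idt.}, (-I)_\star\}$ isomorphically onto $\mathrm{Out}(\mathrm{M})$.
   Context: Affine maps of $E^2$ are written $a+A$ ($x\mapsto a+Ax$); $a+I$ is translation by $a$. For a 2-space group $\mathrm{M}$, let $N_A(\mathrm{M})$ be its normalizer in the affine group of $E^2$. Each $a+A\in N_A(\mathrm{M})$ induces an affinity $(a+A)_\star:\mathrm{M}x\mapsto\mathrm{M}(a+Ax)$ of the flat orbifold $E^2/\mathrm{M}$; $\mathrm{Aff}(\mathrm{M})$ is the group of all such affinities, and $\mathrm{Sym}(\mathrm{M})=\mathrm{Isom}(E^2/\mathrm{M})$ is its subgroup of isometries of the flat orbifold $E^2/\mathrm{M}$ (a Lie group). idt. denotes the identity. $\Omega:\mathrm{Aff}(\mathrm{M})\to\mathrm{Out}(\mathrm{M})$ sends $(a+A)_\star$ to the outer automorphism class of $g\mapsto (a+A)g(a+A)^{-1}$ on $\mathrm{M}$. Here $E^2/\mathrm{M}$ is a Möbius band. *)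

From HB Require Import structures.
From mathcomp Require Import all_boot all_order all_algebra.
From mathcomp Require Import boolp classical_sets reals.
Set Implicit Arguments. Unset Strict Implicit. Unset Printing Implicit Defensive.
Import Order.TTheory GRing.Theory Num.Theory.
Local Open Scope ring_scope.
Local Open Scope classical_set_scope.

Section Affine.
Variable R : realType.

(* An affine map a + A of E^2 = R^2 (column vectors): x |-> a + A x. *)
Record aff := Aff { atr : 'cV[R]_2 ; alin : 'M[R]_2 }.

Definition app (f : aff) (x : 'cV[R]_2) : 'cV[R]_2 := atr f + alin f *m x.
Definition acomp (f g : aff) : aff :=
  Aff (atr f + alin f *m atr g) (alin f *m alin g).
Definition ainv (f : aff) : aff :=
  Aff (- (invmx (alin f) *m atr f)) (invmx (alin f)).
Definition aid : aff := Aff 0 1%:M.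
Definition aminusI : aff := Aff 0 (- 1%:M).
Definition is_affine (f : aff) : Prop := alin f \in unitmx.

Definition e1 : 'cV[R]_2 := \col_i (if val i == 0%N then 1 else 0).
Definition e2 : 'cV[R]_2 := \col_i (if val i == 1%N then 1 else 0).
Definition Aswap : 'M[R]_2 := \matrix_(i, j) (if i == j then 0 else 1).

Inductive inM : aff -> Prop :=
  | inM_e1 : inM (Aff e1 1%:M)
  | inM_e2 : inM (Aff e2 1%:M)
  | inM_A : inM (Aff 0 Aswap)
  | inM_id : inM aid
  | inM_comp f g : inM f -> inM g -> inM (acomp f g)
  | inM_inv f : inM f -> inM (ainv f).

Definition conjb (f m : aff) : aff := acomp (acomp f m) (ainv f).

Definition inNA (f : aff) : Prop :=
  is_affine f /\ forall m, inM m <-> inM (conjb f m).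

(* f_* = g_* as maps of E^2/M : M(f x) = M(g x) for all x *)
Definition same_star (f g : aff) : Prop :=
  forall x, exists m, inM m /\ app f x = app m (app g x).

(* Euclidean norm and the quotient metric of the flat orbifold E^2/M *)
Definition enorm (x : 'cV[R]_2) : R := Num.sqrt (\sum_i x i 0 ^+ 2).
Definition odist (x y : 'cV[R]_2) : R :=
  inf [set enorm (x - app g y) | g in inM].

Definition isometry_star (f : aff) : Prop :=
  forall x y, odist (app f x) (app f y) = odist x y.

(* representatives of Sym(M) = Isom(E^2/M) inside Aff(M) *)
Definition inSym (f : aff) : Prop := inNA f /\ isometry_star f.

(* uniform (compact-open) distance between f_* and g_* on the compact E^2/M *)
Definition supdist (f g : aff) : R :=
  sup [set odist (app f x) (app g x) | x in [set: 'cV[R]_2]].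

Definition is_autM (alpha : aff -> aff) : Prop :=
  [/\ forall m, inM m -> inM (alpha m),
      forall m1 m2, inM m1 -> inM m2 -> alpha (acomp m1 m2) = acomp (alpha m1) (alpha m2),
      forall m1 m2, inM m1 -> inM m2 -> alpha m1 = alpha m2 -> m1 = m2 &
      forall m, inM m -> exists m', inM m' /\ alpha m' = m].

Definition out_equiv (alpha beta : aff -> aff) : Prop :=
  exists g, inM g /\ forall m, inM m -> alpha m = conjb g (beta m).

End Affine.

From HB Require Import structures.
From mathcomp Require Import all_boot all_order all_algebra.
From mathcomp Require Import boolp classical_sets reals trigo.
From mathcomp Require Import zify ring lra.
Import Order.TTheory GRing.Theory Num.Theory.
Set Implicit Arguments. Unset Strict Implicit. Unset Printing Implicit Defensive.
Local Open Scope ring_scope.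

(* The group M consists of the maps x |-> a + P x with a in Z^2 and P in {I, A}.  An affine map
   normalizes M exactly when its linear part is one of +-I, +-A and its translation v has
   v_1 - v_2 in Z; conjugation by such a map permutes M, so it maps M-orbits to M-orbits
   isometrically and Aff(M) = Sym(M).  Modulo M such a map is determined by its sign and by v_1
   mod 1, and sending it to the rotation by 2 pi v_1 (composed with a reflection when the sign
   is -1) identifies Sym(M) with O(2), homeomorphically for the uniform distance on the orbifold.
   An automorphism of M preserves the translations (the elements commuting with all their
   conjugates), hence sends A to a map with linear part A; surjectivity then forces e_1 to go
   to +-e_1 or +-e_2, so the automorphism is conjugation by an element of M, possibly composed
   with conjugation by -I, which itself is not inner. *)

Section Matrix2.
Variable T : Type.
Implicit Types (A B : 'M[T]_2) (u v : 'cV[T]_2).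

Lemma ord2P (i : 'I_2) : i = 0 \/ i = 1.
Proof. by case: i => [[|[|//]]] Hi; [left|right]; apply: val_inj. Qed.

Lemma mx2P A B :
  A 0 0 = B 0 0 -> A 0 1 = B 0 1 -> A 1 0 = B 1 0 -> A 1 1 = B 1 1 -> A = B.
Proof.
move=> h00 h01 h10 h11; apply/matrixP => i j.
by case: (ord2P i) => ->; case: (ord2P j) => ->.
Qed.

Lemma cv2P u v : u 0 0 = v 0 0 -> u 1 0 = v 1 0 -> u = v.
Proof. by move=> h0 h1; apply/matrixP => i j; rewrite (ord1 j); case: (ord2P i) => ->. Qed.

End Matrix2.

Section MatrixEntries.
Variable V : zmodType.

Lemma mxDE m n (A B : 'M[V]_(m, n)) i j : (A + B) i j = A i j + B i j.
Proof. by rewrite mxE. Qed.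

Lemma mxNE m n (A : 'M[V]_(m, n)) i j : (- A) i j = - A i j.
Proof. by rewrite mxE. Qed.

Lemma mxBE m n (A B : 'M[V]_(m, n)) i j : (A - B) i j = A i j - B i j.
Proof. by rewrite !mxE. Qed.

End MatrixEntries.

Lemma mulmx2E (R : pzRingType) m p (A : 'M[R]_(m, 2)) (B : 'M[R]_(2, p)) i j :
  (A *m B) i j = A i 0 * B 0 j + A i 1 * B 1 j.
Proof.
rewrite mxE !big_ord_recl big_ord0 addr0.
by have -> : lift ord0 ord0 = 1 :> 'I_2 by apply: val_inj.
Qed.

Section SignedPermutation.
Variable R : comUnitRingType.
Implicit Types (u : 'cV[R]_2).

(* [spmx s b] is [(-1)^s] times the identity ([b = false]) or the swap ([b = true]). *)
Definition spmx (s b : bool) : 'M[R]_2 :=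
  \matrix_(i, j) ((-1) ^+ s * ((i == j) != b)%:R).

Lemma spmxE s b i j : spmx s b i j = (-1) ^+ s * ((i == j) != b)%:R.
Proof. by rewrite mxE. Qed.

Lemma spmx_mul s b t c : spmx s b *m spmx t c = spmx (s (+) t) (b (+) c).
Proof.
by apply/mx2P; rewrite !mulmx2E !spmxE signr_addb; case: b; case: c => /=; ring.
Qed.

Lemma spmxC s b t c : spmx s b *m spmx t c = spmx t c *m spmx s b.
Proof. by rewrite !spmx_mul addbC [b (+) c]addbC. Qed.

Lemma spmxFF : spmx false false = 1%:M.
Proof. by apply/mx2P; rewrite spmxE !mxE /= mul1r. Qed.

Lemma spmxK s b : spmx s b *m spmx s b = 1%:M.
Proof. by rewrite spmx_mul !addbb spmxFF. Qed.

Lemma spmx_unit s b : spmx s b \in unitmx.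
Proof. by have [] := mulmx1_unit (spmxK s b). Qed.

Lemma invmx_spmx s b : invmx (spmx s b) = spmx s b.
Proof.
by rewrite -[RHS]mul1mx -(mulVmx (spmx_unit s b)) -mulmxA spmxK mulmx1.
Qed.

Lemma spmx_mulv0 s b u : (spmx s b *m u) 0 0 = (-1) ^+ s * (if b then u 1 0 else u 0 0).
Proof. by rewrite mulmx2E !spmxE; case: b => /=; ring. Qed.

Lemma spmx_mulv1 s b u : (spmx s b *m u) 1 0 = (-1) ^+ s * (if b then u 0 0 else u 1 0).
Proof. by rewrite mulmx2E !spmxE; case: b => /=; ring. Qed.

End SignedPermutation.

Arguments spmx {R} s b.

Section AffineGroup.
Variable R : realType.
Local Notation aff := (aff R).
Implicit Types (f g h m : aff) (x y : 'cV[R]_2).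

Lemma acompA f g h : acomp (acomp f g) h = acomp f (acomp g h).
Proof.
by case: f => a A; case: g => b B; case: h => c C; rewrite /acomp /= mulmxDr !mulmxA addrA.
Qed.

Lemma acomp1f f : acomp (aid R) f = f.
Proof. by case: f => a A; rewrite /acomp /= !mul1mx add0r. Qed.

Lemma acompf1 f : acomp f (aid R) = f.
Proof. by case: f => a A; rewrite /acomp /= mulmx0 addr0 mulmx1. Qed.

Lemma acompfV f : is_affine f -> acomp f (ainv f) = aid R.
Proof.
by case: f => a A U; rewrite /acomp /ainv /aid /= mulmxN mulmxA (mulmxV U) mul1mx subrr.
Qed.

Lemma acompVf f : is_affine f -> acomp (ainv f) f = aid R.
Proof. by case: f => a A U; rewrite /acomp /ainv /aid /= (mulVmx U) addrC subrr. Qed.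

Lemma ainv1 : ainv (aid R) = aid R.
Proof. by rewrite /ainv /aid /= invmx1 mulmx0 oppr0. Qed.

Lemma is_affine_inv f : is_affine f -> is_affine (ainv f).
Proof. by rewrite /is_affine /= unitmx_inv. Qed.

Lemma is_affine_comp f g : is_affine f -> is_affine g -> is_affine (acomp f g).
Proof. by rewrite /is_affine /= unitmx_mul => -> ->. Qed.

Lemma ainv_uniq f g : is_affine f -> acomp f g = aid R -> g = ainv f.
Proof. by move=> U h; rewrite -[g]acomp1f -(acompVf U) acompA h acompf1. Qed.

Lemma app_acomp f g x : app (acomp f g) x = app f (app g x).
Proof. by rewrite /app /acomp /= mulmxDr mulmxA addrA. Qed.

Lemma app_aid x : app (aid R) x = x.
Proof. by rewrite /app /= mul1mx add0r. Qed.

Lemma app_ainvK f x : is_affine f -> app (ainv f) (app f x) = x.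
Proof. by move=> U; rewrite -app_acomp acompVf // app_aid. Qed.

Lemma app_ainvKV f x : is_affine f -> app f (app (ainv f) x) = x.
Proof. by move=> U; rewrite -app_acomp acompfV // app_aid. Qed.

Lemma app_sub f x y : app f x - app f y = alin f *m (x - y).
Proof. by rewrite /app mulmxBr opprD addrACA subrr add0r. Qed.

Lemma conjbE a b (A B : 'M[R]_2) : A \in unitmx ->
  conjb (Aff a A) (Aff b B) = Aff (a + A *m b - (A *m B *m invmx A) *m a) (A *m B *m invmx A).
Proof. by move=> U; rewrite /conjb /acomp /ainv /= mulmxN !mulmxA. Qed.

Lemma conjb_trans f w : is_affine f -> conjb f (Aff w 1%:M) = Aff (alin f *m w) 1%:M.
Proof.
case: f => v L U; rewrite conjbE // mulmx1 (mulmxV U) mul1mx.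
by congr Aff; rewrite addrC addKr.
Qed.

Lemma app_conjb f g x : is_affine f -> app (conjb f g) (app f x) = app f (app g x).
Proof. by move=> U; rewrite /conjb !app_acomp app_ainvK. Qed.

Lemma conjbM h m m' : is_affine h ->
  conjb h (acomp m m') = acomp (conjb h m) (conjb h m').
Proof.
move=> U; rewrite /conjb !acompA; congr acomp; congr acomp.
by rewrite -[in RHS]acompA acompVf // acomp1f.
Qed.

Lemma conjb1 h : is_affine h -> conjb h (aid R) = aid R.
Proof. by move=> U; rewrite /conjb acompf1 acompfV. Qed.

Lemma conjbV h m : is_affine h -> is_affine m -> conjb h (ainv m) = ainv (conjb h m).
Proof.
move=> U Um; apply: ainv_uniq.
  by apply: is_affine_comp; [exact: is_affine_comp | exact: is_affine_inv].
by rewrite -conjbM // acompfV // conjb1.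
Qed.

Lemma conjbJ h h' m : is_affine h -> is_affine h' ->
  conjb h (conjb h' m) = conjb (acomp h h') m.
Proof.
move=> U U'; have inv_hh' : ainv (acomp h h') = acomp (ainv h') (ainv h).
  apply/esym/ainv_uniq; first exact: is_affine_comp.
  by rewrite acompA -(acompA h' _ _) acompfV // acomp1f acompfV.
by rewrite /conjb -/(ainv (acomp h h')) inv_hh' !acompA.
Qed.

Lemma conjbK h m : is_affine h -> conjb (ainv h) (conjb h m) = m.
Proof.
move=> U; rewrite conjbJ ?acompVf //; last exact: is_affine_inv.
by rewrite /conjb acomp1f ainv1 acompf1.
Qed.

End AffineGroup.

Section IntegralMatrices.
Variable R : archiNumDomainType.

Lemma mxOver_intD k l (A B : 'M[R]_(k, l)) :
  A \is a mxOver Num.int -> B \is a mxOver Num.int -> A + B \is a mxOver Num.int.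
Proof. by move=> /mxOverP hA /mxOverP hB; apply/mxOverP => i j; rewrite mxE rpredD. Qed.

Lemma mxOver_intN k l (A : 'M[R]_(k, l)) :
  A \is a mxOver Num.int -> - A \is a mxOver Num.int.
Proof. by move=> /mxOverP hA; apply/mxOverP => i j; rewrite mxE rpredN. Qed.

Lemma mxOver_intM k l n (A : 'M[R]_(k, l)) (B : 'M[R]_(l, n)) :
  A \is a mxOver Num.int -> B \is a mxOver Num.int -> A *m B \is a mxOver Num.int.
Proof.
move=> /mxOverP hA /mxOverP hB; apply/mxOverP => i j.
by rewrite mxE rpred_sum // => t _; rewrite rpredM.
Qed.

Lemma spmx_int s b : spmx s b \is a mxOver (@Num.int R).
Proof.
apply/mxOverP => i j; rewrite spmxE rpredM ?rpred_nat //.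
by rewrite rpredX // rpredN rpred1.
Qed.

End IntegralMatrices.

Section GroupM.
Variable R : realType.
Local Notation aff := (aff R).
Local Notation inM := (@inM R).
Local Notation trans v := (Aff v 1%:M).
Implicit Types (f g m : aff) (v w : 'cV[R]_2).

Lemma Aswap_spmx : Aswap R = spmx false true.
Proof. by apply/mx2P; rewrite !mxE /= mul1r. Qed.

Definition Mform m : Prop := atr m \is a mxOver Num.int /\ exists b, alin m = spmx false b.

Lemma inM_Mform m : inM m -> Mform m.
Proof.
have intE v (a b : R) : a \is a Num.int -> b \is a Num.int -> v 0 0 = a -> v 1 0 = b ->
    v \is a mxOver Num.int.
  by move=> ha hb h0 h1; apply/mxOverP => i j; rewrite (ord1 j); case: (ord2P i) => ->; rewrite ?h0 ?h1.
elim=> {m} [||||[a A] [b B] _ [ha [c /= ->]] _ [hb [d /= ->]]|[a A] _ [ha [c /= ->]]].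
- by split; [apply: (intE _ 1 0); rewrite ?mxE | exists false; rewrite spmxFF].
- by split; [apply: (intE _ 0 1); rewrite ?mxE | exists false; rewrite spmxFF].
- by split; [exact: mxOver0 | exists true; rewrite Aswap_spmx].
- by split; [exact: mxOver0 | exists false; rewrite spmxFF].
- split; last by exists (c (+) d); rewrite /= spmx_mul.
  by rewrite /= mxOver_intD // mxOver_intM // spmx_int.
- split; last by exists c; rewrite /= invmx_spmx.
  by rewrite /= invmx_spmx mxOver_intN // mxOver_intM // spmx_int.
Qed.

Lemma inM_transD v w : inM (trans v) -> inM (trans w) -> inM (trans (v + w)).
Proof. by move=> hv hw; have := inM_comp hv hw; rewrite /acomp /= !mul1mx. Qed.

Lemma inM_transN v : inM (trans v) -> inM (trans (- v)).
Proof. by move=> hv; have := inM_inv hv; rewrite /ainv /= invmx1 mul1mx. Qed.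

Lemma inM_transZ v (z : int) : inM (trans v) -> inM (trans (z%:~R *: v)).
Proof.
move=> hv; have hn (n : nat) : inM (trans (n%:R *: v)).
  elim: n => [|n IH]; first by rewrite scale0r; exact: inM_id.
  by rewrite -natr1 scalerDl scale1r addrC; apply: inM_transD.
case: z => n; first by rewrite -pmulrn; exact: hn.
by rewrite NegzE mulrNz scaleNr; apply: inM_transN; rewrite -pmulrn; exact: hn.
Qed.

Lemma Mform_inM m : Mform m -> inM m.
Proof.
case: m => a A [/mxOverP ha [b /= ->]].
have [/intrP [z0 h0] /intrP [z1 h1]] := (ha 0 0, ha 1 0).
have hta : inM (trans a).
  have -> : a = z0%:~R *: e1 R + z1%:~R *: e2 R by apply/cv2P; rewrite !mxE /= -h0 -h1; lra.
  by apply: inM_transD; apply: inM_transZ; [exact: inM_e1 | exact: inM_e2].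
have hlin : inM (Aff 0 (spmx false b)).
  by case: b; [rewrite -Aswap_spmx; exact: inM_A | rewrite spmxFF; exact: inM_id].
by have := inM_comp hta hlin; rewrite /acomp /= mulmx0 addr0 mul1mx.
Qed.

Lemma inME m : inM m <-> Mform m.
Proof. by split; [exact: inM_Mform | exact: Mform_inM]. Qed.

Lemma inM_affine m : inM m -> is_affine m.
Proof. by move=> /inME [_ [b hb]]; rewrite /is_affine hb spmx_unit. Qed.

Lemma inM_conjb g m : inM g -> inM m -> inM (conjb g m).
Proof. by move=> hg hm; rewrite /conjb; repeat (apply: inM_comp || apply: inM_inv). Qed.

End GroupM.

Section Normalizer.
Variable R : realType.
Local Notation aff := (aff R).
Local Notation inM := (@inM R).
Local Notation isint x := (x \is a Num.int).
Implicit Types (f g m : aff) (v w : 'cV[R]_2) (L : 'M[R]_2).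

Definition NAform f : Prop :=
  exists s b, alin f = spmx s b /\ isint (atr f 0 0 - atr f 1 0).

Lemma NAform_affine f : NAform f -> is_affine f.
Proof. by case=> s [b [hL _]]; rewrite /is_affine hL spmx_unit. Qed.

Lemma sub_swap_int v c : isint (v 0 0 - v 1 0) ->
  v - spmx false c *m v \is a mxOver Num.int.
Proof.
move=> hv; apply/mxOverP => i j; rewrite (ord1 j) mxBE.
case: (ord2P i) => ->; rewrite ?spmx_mulv0 ?spmx_mulv1 /= expr0 mul1r.
- by case: c; rewrite ?subrr.
- by case: c; rewrite ?subrr // -opprB rpredN.
Qed.

Lemma NAform_conjb f m : NAform f -> inM m -> inM (conjb f m).
Proof.
case: f => v L [s [b [/= -> hv]]] /inME [ha [c hc]]; case: m ha hc => a B /= ha ->.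
rewrite conjbE ?spmx_unit // invmx_spmx !spmx_mul.
have -> : s (+) false (+) s = false by case: s.
have -> : b (+) c (+) b = c by case: b; case: c.
apply/inME; split; last by exists c.
rewrite /= addrAC mxOver_intD ?mxOver_intM ?spmx_int //.
exact: sub_swap_int.
Qed.

Lemma NAform_inv f : NAform f -> NAform (ainv f).
Proof.
case: f => v L [s [b [/= -> hv]]]; exists s, b; rewrite /= invmx_spmx; split=> //.
rewrite !mxNE spmx_mulv0 spmx_mulv1 -opprD -mulrBr rpredN rpredM ?rpredX ?rpredN ?rpred1 //.
by case: b; rewrite // -opprB rpredN.
Qed.

Lemma NAform_inNA f : NAform f -> inNA f.
Proof.
move=> hf; split; first exact: NAform_affine.
move=> m; split; first exact: NAform_conjb.
move=> hm; rewrite -(conjbK m (NAform_affine hf)).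
exact: NAform_conjb (NAform_inv hf) hm.
Qed.

Lemma int_unit (a b : R) : isint a -> isint b -> a * b = 1 -> a = 1 \/ a = -1.
Proof.
move=> /intrP [z ->] /intrP [w ->] h.
have : z \is a GRing.unit by apply/unitrPr; exists w; apply: (@intr_inj R); rewrite intrM h.
by case/orP => /eqP ->; [left | right]; rewrite ?intrN.
Qed.

Lemma spmx_sym s b :
  spmx s b 1 1 = spmx s b 0 0 :> R /\ spmx s b 0 1 = spmx s b 1 0 :> R.
Proof. by rewrite !spmxE. Qed.

Lemma sym_unimodular_int (p q x y : R) : isint p -> isint q -> isint x -> isint y ->
  p * x + q * y = 1 -> p * y + q * x = 0 ->
  exists s b, spmx s b 0 0 = p /\ spmx s b 1 0 = q.
Proof.
move=> hp hq hx hy h1 h0.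
have u1 : p + q = 1 \/ p + q = -1 by apply: (@int_unit _ (x + y)); rewrite ?rpredD //; nra.
have u2 : p - q = 1 \/ p - q = -1 by apply: (@int_unit _ (x - y)); rewrite ?rpredB //; nra.
case: u1 u2 => e1 [] e2.
- by exists false, false; rewrite !spmxE /= mul1r; split; lra.
- by exists false, true; rewrite !spmxE /= mul1r; split; lra.
- by exists true, true; rewrite !spmxE /= mulN1r; split; lra.
- by exists true, false; rewrite !spmxE /= mulN1r; split; lra.
Qed.

Lemma swap_commute_sym L : L *m Aswap R = Aswap R *m L -> L 1 1 = L 0 0 /\ L 1 0 = L 0 1.
Proof.
move/matrixP => LA; have := LA 0 0; have := LA 0 1.
by rewrite !mulmx2E !mxE /=; split; lra.
Qed.

Lemma unimodular_swap_commute L : L \in unitmx ->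
  L \is a mxOver Num.int -> invmx L \is a mxOver Num.int ->
  L *m Aswap R = Aswap R *m L -> exists s b, L = spmx s b.
Proof.
move=> U /mxOverP hL /mxOverP hLi LA.
have LiA : invmx L *m Aswap R = Aswap R *m invmx L.
  have := congr1 (fun K => invmx L *m K *m invmx L) LA.
  by rewrite /= !mulmxA (mulVmx U) mul1mx -[_ *m L *m invmx L]mulmxA (mulmxV U) mulmx1 => ->.
have [L11 L10] := swap_commute_sym LA; have [Li11 Li10] := swap_commute_sym LiA.
have /matrixP LLi := mulmxV U.
have := LLi 0 0; have := LLi 1 0; rewrite !mulmx2E !mxE /= L11 L10 Li10 => h0 h1.
have h0' : L 0 0 * invmx L 0 1 + L 0 1 * invmx L 0 0 = 0 by lra.
have [s [b [e0 e1]]] := sym_unimodular_int (hL 0 0) (hL 0 1) (hLi 0 0) (hLi 0 1) h1 h0'.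
exists s, b; have [S11 S01] := spmx_sym s b.
by apply/mx2P; rewrite ?S11 ?S01 ?e0 ?e1 ?L11 ?L10.
Qed.

Lemma intmx_cols L : L *m e1 R \is a mxOver Num.int -> L *m e2 R \is a mxOver Num.int ->
  L \is a mxOver Num.int.
Proof.
move=> /mxOverP h1 /mxOverP h2; apply/mxOverP => i j.
have := h1 i 0; have := h2 i 0; rewrite !mulmx2E !mxE /= !mulr1 !mulr0 addr0 add0r.
by case: (ord2P j) => -> .
Qed.

Lemma inNA_NAform f : inNA f -> NAform f.
Proof.
case: f => v L [U hN]; rewrite /is_affine /= in U.
have cT w : conjb (Aff v L) (Aff w 1%:M) = Aff (L *m w) 1%:M by rewrite conjb_trans.
have hLint : L \is a mxOver Num.int.
  have [/inME [h1 _] /inME [h2 _]] := ((hN _).1 (inM_e1 R), (hN _).1 (inM_e2 R)).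
  by rewrite !cT in h1 h2; exact: intmx_cols.
have hLiint : invmx L \is a mxOver Num.int.
  have cTi w : conjb (Aff v L) (Aff (invmx L *m w) 1%:M) = Aff w 1%:M.
    by rewrite cT mulmxA (mulmxV U) mul1mx.
  have := (hN (Aff (invmx L *m e1 R) 1%:M)).2; rewrite cTi => /(_ (inM_e1 R)) /inME [h1 _].
  have := (hN (Aff (invmx L *m e2 R) 1%:M)).2; rewrite cTi => /(_ (inM_e2 R)) /inME [h2 _].
  exact: intmx_cols.
have /inME [hA [c hc]] := (hN _).1 (inM_A R); rewrite conjbE //= in hA hc.
have LAL : L *m Aswap R *m invmx L = Aswap R.
  case: c hc => hc; first by rewrite hc Aswap_spmx.
  have : Aswap R = invmx L *m (L *m Aswap R *m invmx L) *m L.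
    by rewrite !mulmxA (mulVmx U) mul1mx -mulmxA (mulVmx U) mulmx1.
  rewrite hc spmxFF mulmx1 (mulVmx U).
  by move/matrixP/(_ 0 0); rewrite !mxE /= => /eqP; rewrite eq_sym oner_eq0.
have [s [b hLs]] : exists s b, L = spmx s b.
  apply: unimodular_swap_commute => //.
  by rewrite -[in RHS]LAL -!mulmxA (mulVmx U) mulmx1.
exists s, b; split => //=.
move/mxOverP: hA => /(_ 0 0); by rewrite LAL mulmx0 addr0 mxBE Aswap_spmx spmx_mulv0 /= expr0 mul1r.
Qed.

Lemma inNAE f : inNA f <-> NAform f.
Proof. by split; [exact: inNA_NAform | exact: NAform_inNA]. Qed.

End Normalizer.

Section Isometry.
Variable R : realType.
Local Notation aff := (aff R).
Implicit Types (f g : aff) (x y w : 'cV[R]_2).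

Lemma enormE w : enorm w = Num.sqrt (w 0 0 ^+ 2 + w 1 0 ^+ 2).
Proof.
rewrite /enorm !big_ord_recl big_ord0 addr0.
by have -> : lift ord0 ord0 = 1 :> 'I_2 by apply: val_inj.
Qed.

Lemma enorm_spmx s b w : enorm (spmx s b *m w) = enorm w.
Proof.
rewrite !enormE spmx_mulv0 spmx_mulv1; congr Num.sqrt.
by rewrite !exprMn sqrr_sign !mul1r; case: b; rewrite // addrC.
Qed.

Lemma NAform_isometry f : NAform f -> isometry_star f.
Proof.
move=> hf x y; have U := NAform_affine hf; have [s [b [hL _]]] := hf.
rewrite /odist; congr inf; apply/seteqP; split => r [g hg <-].
- exists (conjb (ainv f) g); first exact: NAform_conjb (NAform_inv hf) hg.
  have -> : app (conjb (ainv f) g) y = app (ainv f) (app g (app f y)).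
    by rewrite -{1}(app_ainvK y U) app_conjb //; exact: is_affine_inv.
  by rewrite -(enorm_spmx s b) -hL -app_sub app_ainvKV.
- exists (conjb f g); first exact: NAform_conjb hf hg.
  by rewrite app_conjb // app_sub hL enorm_spmx.
Qed.

End Isometry.

Section OuterAutomorphisms.
Variable R : realType.
Local Notation aff := (aff R).
Local Notation inM := (@inM R).
Local Notation isint x := (x \is a Num.int).
Local Notation trans v := (Aff v 1%:M).
Implicit Types (f g h m : aff) (u v : 'cV[R]_2).

Lemma aminusI_spmx : alin (aminusI R) = spmx true false.
Proof. by apply/mx2P; rewrite !mxE /= expr1 mulN1r. Qed.

Lemma inNA_aminusI : inNA (aminusI R).
Proof.
apply/inNAE; exists true, false; split; first exact: aminusI_spmx.
by rewrite /= !mxE subrr rpred0.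
Qed.

Lemma aminusI_not_inner : ~ out_equiv (conjb (aminusI R)) id.
Proof.
case=> g [hg /(_ _ (inM_e1 R))]; have Ug := inM_affine hg.
rewrite !conjb_trans // /is_affine aminusI_spmx ?spmx_unit //.
move: hg => /inME [_ [c ->]] [] /matrixP /(_ 0 0).
by rewrite !spmx_mulv0 !mxE /= expr0 expr1; case: c => /=; lra.
Qed.

Lemma Aswap_mulv0 u : (Aswap R *m u) 0 0 = u 1 0.
Proof. by rewrite Aswap_spmx spmx_mulv0 /= expr0 mul1r. Qed.

Lemma Aswap_mulv1 u : (Aswap R *m u) 1 0 = u 0 0.
Proof. by rewrite Aswap_spmx spmx_mulv1 /= expr0 mul1r. Qed.

Lemma Aswap_e1 : Aswap R *m e1 R = e2 R.
Proof. by apply/cv2P; rewrite ?Aswap_mulv0 ?Aswap_mulv1 !mxE. Qed.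

(* A group-theoretic description of the translations in [M], hence preserved by automorphisms. *)
Definition comm_conjugates m := forall g, inM g -> acomp m (conjb g m) = acomp (conjb g m) m.

Lemma comm_conjugatesE m : inM m -> comm_conjugates m <-> alin m = 1%:M.
Proof.
move=> hm; split.
- move: (hm) => /inME [_ [[] hc] hcomm]; last by rewrite hc spmxFF.
  have := hcomm _ (inM_e1 R); case: m hm hc hcomm => a A /= _ -> _.
  rewrite conjbE ?unitmx1 // /acomp /= invmx1 !mul1mx !mulmx1.
  case=> /matrixP /(_ 1 0) h; exfalso; move: h.
  by rewrite !(mxBE, mxDE, mulmx2E) !mxE /= expr0; lra.
- move=> hL g hg; case: m hm hL => a A /= _ ->.
  rewrite conjb_trans; last exact: inM_affine.
  by rewrite /acomp /= !mul1mx addrC.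
Qed.

(* The subgroup generated by the translations by [(x, y)] and [(y, x)] and by [Aff (t, -t) Aswap]. *)
Definition lattice_form (x y t : R) h := exists c, alin h = spmx false c /\
  exists n k : int, atr h 0 0 - (if c then t else 0) = n%:~R * x + k%:~R * y /\
                    atr h 1 0 + (if c then t else 0) = n%:~R * y + k%:~R * x.

Lemma lattice_form_comp x y t f g :
  lattice_form x y t f -> lattice_form x y t g -> lattice_form x y t (acomp f g).
Proof.
case: f => a A [cf [/= -> [nf [kf [ef0 ef1]]]]].
case: g => b B [cg [/= -> [ng [kg [eg0 eg1]]]]].
exists (cf (+) cg); split; first by rewrite /= spmx_mul.
rewrite /= !mxDE spmx_mulv0 spmx_mulv1 expr0 mul1r.
case: cf cg ef0 ef1 eg0 eg1 => [] [] /= ef0 ef1 eg0 eg1.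
- by exists (nf + kg), (kf + ng); rewrite !intrD; split; nra.
- by exists (nf + kg), (kf + ng); rewrite !intrD; split; nra.
- by exists (nf + ng), (kf + kg); rewrite !intrD; split; nra.
- by exists (nf + ng), (kf + kg); rewrite !intrD; split; nra.
Qed.

Lemma lattice_form_inv x y t f : lattice_form x y t f -> lattice_form x y t (ainv f).
Proof.
case: f => a A [c [/= -> [n [k [e0 e1]]]]].
exists c; split; first by rewrite /= invmx_spmx.
rewrite /= invmx_spmx !mxNE spmx_mulv0 spmx_mulv1 expr0 mul1r.
case: c e0 e1 => /= e0 e1.
- by exists (- k), (- n); rewrite !intrN; split; nra.
- by exists (- n), (- k); rewrite !intrN; split; nra.
Qed.

Section Automorphism.
Variable alpha : aff -> aff.
Hypothesis autM_alpha : is_autM alpha.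

Lemma autM_in m : inM m -> inM (alpha m).
Proof. by case: autM_alpha => h _ _ _; exact: h. Qed.

Lemma autM_comp m m' : inM m -> inM m' -> alpha (acomp m m') = acomp (alpha m) (alpha m').
Proof. by case: autM_alpha => _ h _ _; exact: h. Qed.

Lemma autM_inj m m' : inM m -> inM m' -> alpha m = alpha m' -> m = m'.
Proof. by case: autM_alpha => _ _ h _; exact: h. Qed.

Lemma autM_surj m : inM m -> exists m', inM m' /\ alpha m' = m.
Proof. by case: autM_alpha => _ _ _ h; exact: h. Qed.

Lemma autM_id : alpha (aid R) = aid R.
Proof.
have U := inM_affine (autM_in (inM_id R)).
have := congr1 (acomp (ainv (alpha (aid R)))) (autM_comp (inM_id R) (inM_id R)).
by rewrite acompf1 -acompA acompVf // acomp1f => <-.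
Qed.

Lemma autM_inv m : inM m -> alpha (ainv m) = ainv (alpha m).
Proof.
move=> hm; apply: ainv_uniq; first exact: inM_affine (autM_in hm).
rewrite -autM_comp ?acompfV ?autM_id //; [exact: inM_affine | exact: inM_inv].
Qed.

Lemma autM_conjb g m : inM g -> inM m -> alpha (conjb g m) = conjb (alpha g) (alpha m).
Proof.
by move=> hg hm; rewrite /conjb !autM_comp ?autM_inv //; repeat (apply: inM_comp || apply: inM_inv).
Qed.

Lemma autM_trans m : inM m -> alin (alpha m) = 1%:M <-> alin m = 1%:M.
Proof.
move=> hm; rewrite -(comm_conjugatesE hm) -(comm_conjugatesE (autM_in hm)); split.
- move=> hQ g hg; have hc := inM_conjb hg hm.
  apply: autM_inj; try exact: inM_comp.
  rewrite (autM_comp hm hc) (autM_comp hc hm) (autM_conjb hg hm); exact/hQ/autM_in.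
- move=> hQ g /autM_surj [g' [hg' <-]]; have hc := inM_conjb hg' hm.
  by rewrite -(autM_conjb hg' hm) -(autM_comp hm hc) -(autM_comp hc hm) hQ.
Qed.

Lemma autM_generators : exists p v,
  [/\ alpha (trans (e1 R)) = trans p, alpha (trans (e2 R)) = trans (Aswap R *m p),
      alpha (Aff 0 (Aswap R)) = Aff v (Aswap R), v 1 0 = - v 0 0 &
      [/\ isint (p 0 0), isint (p 1 0) & isint (v 0 0)]].
Proof.
have transL m : inM m -> alin m = 1%:M -> alpha m = trans (atr (alpha m)).
  by move=> hm /(autM_trans hm) <-; case: (alpha m).
have E1 := transL _ (inM_e1 R) erefl; have E2 := transL _ (inM_e2 R) erefl.
have /inME [/mxOverP hp _] := autM_in (inM_e1 R); rewrite E1 in hp.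
set p := atr (alpha (trans (e1 R))) in hp E1 E2 *.
have /inME [/mxOverP hv [c hc]] := autM_in (inM_A R).
have LA : alin (alpha (Aff 0 (Aswap R))) = Aswap R.
  case: c hc => hc; rewrite hc Aswap_spmx //.
  have /(autM_trans (inM_A R)) : alin (alpha (Aff 0 (Aswap R))) = 1%:M by rewrite hc spmxFF.
  by move=> /matrixP /(_ 0 0); rewrite !mxE /= => /eqP; rewrite eq_sym oner_eq0.
have EA : alpha (Aff 0 (Aswap R)) = Aff (atr (alpha (Aff 0 (Aswap R)))) (Aswap R).
  by case: (alpha _) LA => ? ? /= ->.
set v := atr (alpha (Aff 0 (Aswap R))) in hv EA *.
exists p, v; split; [exact: E1 | | exact: EA | | by split; [exact: hp | exact: hp | exact: hv]].
- have e2E : trans (e2 R) = conjb (Aff 0 (Aswap R)) (trans (e1 R)).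
    by rewrite conjb_trans /= ?Aswap_e1 // /is_affine /= Aswap_spmx spmx_unit.
  rewrite e2E autM_conjb ?EA ?E1; [|exact: inM_A|exact: inM_e1].
  by rewrite conjb_trans // /is_affine /= Aswap_spmx spmx_unit.
- have A2 : acomp (Aff 0 (Aswap R)) (Aff 0 (Aswap R)) = aid R.
    by rewrite /acomp /= mulmx0 addr0 Aswap_spmx spmxK.
  move: (congr1 alpha A2); rewrite autM_comp ?autM_id ?EA; try exact: inM_A.
  by case=> /matrixP /(_ 0 0); rewrite mxDE Aswap_mulv0 !mxE /=; lra.
Qed.

Lemma autM_lattice_form p v :
  alpha (trans (e1 R)) = trans p -> alpha (trans (e2 R)) = trans (Aswap R *m p) ->
  alpha (Aff 0 (Aswap R)) = Aff v (Aswap R) -> v 1 0 = - v 0 0 ->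
  forall m, inM m -> lattice_form (p 0 0) (p 1 0) (v 0 0) (alpha m).
Proof.
move=> E1 E2 EA hv m; elim=> {m} [||||f g hf IHf hg IHg|f hf IH].
- rewrite E1; exists false; split; first by rewrite spmxFF.
  by exists 1, 0; rewrite /= subr0; split; lra.
- rewrite E2; exists false; split; first by rewrite spmxFF.
  by exists 0, 1; rewrite /= Aswap_mulv0 Aswap_mulv1; split; lra.
- rewrite EA; exists true; split; first by rewrite Aswap_spmx.
  by exists 0, 0; rewrite /= hv; split; lra.
- rewrite autM_id; exists false; split; first by rewrite spmxFF.
  by exists 0, 0; rewrite /= !mxE; split; lra.
- by rewrite autM_comp //; exact: lattice_form_comp IHf IHg.
- by rewrite autM_inv //; exact: lattice_form_inv IH.
Qed.

Lemma autM_eq_conjb h : is_affine h ->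
  alpha (trans (e1 R)) = conjb h (trans (e1 R)) ->
  alpha (trans (e2 R)) = conjb h (trans (e2 R)) ->
  alpha (Aff 0 (Aswap R)) = conjb h (Aff 0 (Aswap R)) ->
  forall m, inM m -> alpha m = conjb h m.
Proof.
move=> U h1 h2 h3 m; elim=> // [|f g hf IHf hg IHg|f hf IH].
- by rewrite autM_id conjb1.
- by rewrite autM_comp // conjbM // IHf IHg.
- by rewrite autM_inv // conjbV ?IH //; exact: inM_affine.
Qed.

Lemma autM_inner_or_aminusI : out_equiv alpha id \/ out_equiv alpha (conjb (aminusI R)).
Proof.
have [p [v [E1 E2 EA hv [hx hy ht]]]] := autM_generators.
have [m1 [hm1 am1]] := autM_surj (inM_e1 R).
have [c [hc [n [k []]]]] := autM_lattice_form E1 E2 EA hv hm1.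
rewrite am1 /= in hc *; have {hc} -> : c = false.
  by case: c hc => // /matrixP /(_ 0 0); rewrite !mxE /= expr0 mul1r => /eqP; rewrite oner_eq0.
rewrite !mxE /= subr0 addr0 => en ek.
have [s [b [ps0 ps1]]] : exists s b, spmx s b 0 0 = p 0 0 /\ spmx s b 1 0 = p 1 0.
  apply: (sym_unimodular_int hx hy (intr_int _ n) (intr_int _ k)); lra.
(* Conjugation by [Aff u (spmx s b)] reproduces the images of the three generators. *)
pose u : 'cV[R]_2 := \col_i (if val i == 0%N then v 0 0 else 0).
have uM b' : inM (Aff u (spmx false b')).
  apply/inME; split; last by exists b'.
  by apply/mxOverP => i j; rewrite !mxE; case: ifP; rewrite ?rpred0.
have hp : p = spmx s b *m e1 R.
  by apply/cv2P; rewrite mulmx2E -?ps0 -?ps1 !mxE /= mulr1 mulr0 addr0.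
have agree : forall m, inM m -> alpha m = conjb (Aff u (spmx s b)) m.
  have U : is_affine (Aff u (spmx s b)) by exact: spmx_unit.
  apply: autM_eq_conjb => //; rewrite ?EA ?E1 ?E2 ?conjb_trans //= ?hp //.
  - by rewrite mulmxA Aswap_spmx spmxC -mulmxA -Aswap_spmx Aswap_e1.
  - rewrite conjbE ?spmx_unit // mulmx0 addr0 invmx_spmx Aswap_spmx !spmx_mul.
    rewrite (_ : s (+) false (+) s = false); last by case: (s).
    rewrite (_ : b (+) true (+) b = true); last by case: (b).
    congr Aff; apply/cv2P; rewrite mxBE ?spmx_mulv0 ?spmx_mulv1 /= expr0 mul1r !mxE /=.
      by rewrite subr0.
    by rewrite hv sub0r.
case: s {ps0 ps1 hp} agree => agree.
- right; exists (Aff u (spmx false b)); split => // m hm.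
  rewrite agree // conjbJ; last (by rewrite /is_affine aminusI_spmx spmx_unit); last exact: spmx_unit.
  by rewrite /acomp aminusI_spmx /= mulmx0 addr0 spmx_mul addbF.
- by left; exists (Aff u (spmx false b)).
Qed.

End Automorphism.
End OuterAutomorphisms.

Section Trigonometry.
Variable R : realType.
Local Notation isint x := (x \is a Num.int).
Implicit Types (a b t : R).

Definition cos_turn a := cos (2 * pi * a).
Definition sin_turn a := sin (2 * pi * a).

Lemma cos_sin_addn (x : R) (n : nat) :
  cos (x + 2 * pi * n%:R) = cos x /\ sin (x + 2 * pi * n%:R) = sin x.
Proof.
have -> : 2 * pi * n%:R = (2 * pi) *+ n :> R by rewrite mulr_natr.
have P2 : 2 * pi = pi *+ 2 :> R by rewrite mulr2n; ring.
by rewrite P2; split; [exact: (periodicn (@cosD2pi R)) | exact: (periodicn (@sinD2pi R))].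
Qed.

Lemma cos_sin_addz (x : R) (z : int) :
  cos (x + 2 * pi * z%:~R) = cos x /\ sin (x + 2 * pi * z%:~R) = sin x.
Proof.
case: z => n; first exact: cos_sin_addn.
have [hc hs] := cos_sin_addn (x + 2 * pi * (Negz n)%:~R) n.+1.
have e : (Negz n)%:~R + n.+1%:R = 0 :> R by rewrite NegzE mulrNz -pmulrn addNr.
by rewrite -addrA -mulrDr e mulr0 addr0 in hc hs.
Qed.

Lemma cos_turn_addz a d : isint d -> cos_turn (a + d) = cos_turn a.
Proof. by move=> /intrP [z ->]; rewrite /cos_turn mulrDr; case: (cos_sin_addz (2 * pi * a) z). Qed.

Lemma sin_turn_addz a d : isint d -> sin_turn (a + d) = sin_turn a.
Proof. by move=> /intrP [z ->]; rewrite /sin_turn mulrDr; case: (cos_sin_addz (2 * pi * a) z). Qed.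

Lemma cos_turnD a b : cos_turn (a + b) = cos_turn a * cos_turn b - sin_turn a * sin_turn b.
Proof. by rewrite /cos_turn /sin_turn mulrDr cosD. Qed.

Lemma sin_turnD a b : sin_turn (a + b) = sin_turn a * cos_turn b + cos_turn a * sin_turn b.
Proof. by rewrite /cos_turn /sin_turn mulrDr sinD. Qed.

Lemma cos_turnN a : cos_turn (- a) = cos_turn a.
Proof. by rewrite /cos_turn mulrN cosN. Qed.

Lemma sin_turnN a : sin_turn (- a) = - sin_turn a.
Proof. by rewrite /sin_turn mulrN sinN. Qed.

Lemma cos2Dsin2_turn a : cos_turn a ^+ 2 + sin_turn a ^+ 2 = 1.
Proof. exact: cos2Dsin2. Qed.

Lemma cos_turn_norm a : cos_turn a = cos (2 * pi * `|a|).
Proof.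
rewrite /cos_turn -cos_norm normrM; congr (cos (_ * _)).
by rewrite ger0_norm // mulr_ge0 // pi_ge0.
Qed.

Lemma cos_lt_0pi (x y : R) : 0 <= x -> x < y -> y <= pi -> cos y < cos x.
Proof.
move=> hx hxy hy; rewrite ltr_cos ?in_itv /=; [exact: hxy | |]; apply/andP; split; lra.
Qed.

Lemma cos_le_0pi (x y : R) : 0 <= x -> x <= y -> y <= pi -> cos y <= cos x.
Proof.
move=> hx; rewrite le_eqVlt => /orP [/eqP -> // | hxy] hy.
exact/ltW/cos_lt_0pi.
Qed.

Lemma nearest_int t : exists k : int, `|t - k%:~R| <= 1/2.
Proof.
exists (Num.floor (t + 1/2)); have := floor_itv (t + 1/2).
by rewrite intrD mulr1z ler_norml => /andP [h1 h2]; apply/andP; split; lra.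
Qed.

Lemma cos_turn_nearest t : exists k : int,
  `|t - k%:~R| <= 1/2 /\ cos_turn t = cos (2 * pi * `|t - k%:~R|).
Proof.
have [k hk] := nearest_int t; exists k; split => //.
by rewrite -cos_turn_norm cos_turn_addz // rpredN intr_int.
Qed.

Lemma cos_turn_lt1 a : 0 < a <= 1/2 -> cos_turn a < 1.
Proof.
move=> /andP [h1 h2]; rewrite -(cos0 R); have hp := pi_gt0 R.
by apply: cos_lt_0pi; nra.
Qed.

Lemma cos_turn_gt_near a t : 0 < a <= 1/2 -> cos_turn a < cos_turn t ->
  exists k : int, `|t - k%:~R| < a.
Proof.
move=> /andP [h1 h2]; have [k [hk ->]] := cos_turn_nearest t => hc; exists k.
rewrite ltNge; apply/negP => hge; have hp := pi_gt0 R.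
suff : cos (2 * pi * `|t - k%:~R|) <= cos_turn a by lra.
by apply: cos_le_0pi; nra.
Qed.

Lemma cos_turn_eq1 t : cos_turn t = 1 -> isint t.
Proof.
move=> h1; have [k [hk hc]] := cos_turn_nearest t; rewrite h1 in hc.
have hp := pi_gt0 R; have [tk | tk] := eqVneq (t - k%:~R) 0.
  by rewrite -(subrK k%:~R t) tk add0r intr_int.
suff : cos (2 * pi * `|t - k%:~R|) < cos 0 by rewrite -hc cos0 ltxx.
have : 0 < `|t - k%:~R| by rewrite normr_gt0.
by move=> ?; apply: cos_lt_0pi; nra.
Qed.

Lemma angle_exists (c s : R) : c ^+ 2 + s ^+ 2 = 1 -> exists a, cos_turn a = c /\ sin_turn a = s.
Proof.
move=> h; have hc : -1 <= c <= 1 by apply/andP; split; nra.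
have hp := pi_gt0 R.
have cphi : cos (acos c) = c by rewrite acosK // in_itv /=.
have sphi : sin (acos c) = `|s| by rewrite sin_acos // -sqrtr_sqr; congr Num.sqrt; lra.
pose phi := if 0 <= s then acos c else - acos c.
exists (phi / (2 * pi)); rewrite /cos_turn /sin_turn mulrC mulfVK; last by apply/eqP; nra.
rewrite /phi; case: ifP => hs; first by rewrite cphi sphi ger0_norm.
by rewrite cosN sinN cphi sphi ltr0_norm ?opprK // ltNge hs.
Qed.

(* [cos_turn t >= 1 - e^2/16] gives [|sin_turn t| < e/2] and [1 - cos_turn t <= e^2/16],
   whose contributions to both differences add up to less than [e]. *)
Lemma cos_sin_turn_close (e t a : R) : 0 < e <= 1 -> 2 * pi * `|t| <= acos (1 - e ^+ 2 / 16) ->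
  `|cos_turn a - cos_turn (a - t)| < e /\ `|sin_turn a - sin_turn (a - t)| < e.
Proof.
move=> /andP [he1 he2] ht; have hp := pi_gt0 R.
have hin : -1 <= 1 - e ^+ 2 / 16 <= 1 by apply/andP; split; nra.
have hct : 1 - e ^+ 2 / 16 <= cos_turn t.
  rewrite cos_turn_norm -[X in X <= _](acosK hin); have := normr_ge0 t.
  by move=> ?; apply: cos_le_0pi; rewrite ?acos_lepi //; nra.
have hct1 : cos_turn t <= 1 by exact: cos_le1.
have hst : `|sin_turn t| < e / 2.
  have hn : `|sin_turn t| ^+ 2 = sin_turn t ^+ 2 by rewrite real_normK ?num_real.
  by have := cos2Dsin2_turn t; have := normr_ge0 (sin_turn t); nra.
have [hca hsa] := (cos_max (2 * pi * a), sin_max (2 * pi * a)).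
have hA : `|1 - cos_turn t| <= e ^+ 2 / 16 by rewrite ger0_norm; lra.
rewrite -/(cos_turn a) -/(sin_turn a) in hca hsa.
have [hs0 h10] := (normr_ge0 (sin_turn t), normr_ge0 (1 - cos_turn t)).
have hmul (x y : R) : `|x| <= 1 -> `|x * y| <= `|y|.
  by move=> hx; rewrite normrM ler_piMl.
split.
- have -> : cos_turn a - cos_turn (a - t) = cos_turn a * (1 - cos_turn t) - sin_turn a * sin_turn t.
    by rewrite cos_turnD cos_turnN sin_turnN; ring.
  apply: le_lt_trans (ler_normB _ _) _.
  by have := hmul _ (1 - cos_turn t) hca; have := hmul _ (sin_turn t) hsa; nra.
- have -> : sin_turn a - sin_turn (a - t) = sin_turn a * (1 - cos_turn t) + cos_turn a * sin_turn t.
    by rewrite sin_turnD cos_turnN sin_turnN; ring.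
  apply: le_lt_trans (ler_normD _ _) _.
  by have := hmul _ (1 - cos_turn t) hsa; have := hmul _ (sin_turn t) hca; nra.
Qed.

End Trigonometry.

Section OrthogonalGroup.
Variable R : realType.
Local Notation aff := (aff R).
Local Notation isint x := (x \is a Num.int).
Implicit Types (f g : aff) (a : R).

Definition O2mx (s : bool) a : 'M[R]_2 := \matrix_(i, j)
  if val i == 0%N then (if val j == 0%N then cos_turn a else - (-1) ^+ s * sin_turn a)
  else (if val j == 0%N then sin_turn a else (-1) ^+ s * cos_turn a).

Lemma O2mx_orth s a : (O2mx s a)^T *m O2mx s a = 1%:M.
Proof.
have h := cos2Dsin2_turn a; rewrite !expr2 in h.
by apply/mx2P; rewrite !mulmx2E !mxE /=; case: s; rewrite ?expr0 ?expr1; lra.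
Qed.

Lemma O2mx_addz s a d : isint d -> O2mx s (a + d) = O2mx s a.
Proof. by move=> hd; apply/matrixP => i j; rewrite !mxE cos_turn_addz ?sin_turn_addz. Qed.

Lemma O2mx_mul s t a (b : R) : O2mx s a *m O2mx t b = O2mx (s (+) t) (a + (-1) ^+ s * b).
Proof.
apply/mx2P; rewrite !mulmx2E !mxE !signr_addb /=;
by case: s; rewrite ?expr0 ?expr1 ?mul1r ?mulN1r ?cos_turnD ?sin_turnD ?cos_turnN ?sin_turnN; ring.
Qed.

(* The sign [s] of the linear part [spmx s b] of [f], read off its first row. *)
Definition O2sign f : bool := alin f 0 0 + alin f 0 1 < 0.
Definition O2of f : 'M[R]_2 := O2mx (O2sign f) (atr f 0 0).

Lemma O2ofE f s b : alin f = spmx s b -> O2of f = O2mx s (atr f 0 0).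
Proof.
move=> hf; rewrite /O2of /O2sign hf !spmxE; congr O2mx.
by case: (s); case: (b); rewrite /= ?expr0 ?expr1; apply/idP/idP; lra.
Qed.

Lemma O2of_orth f : NAform f -> (O2of f)^T *m O2of f = 1%:M.
Proof. by move=> [s [b [hf _]]]; rewrite (O2ofE hf) O2mx_orth. Qed.

(* When [f] swaps coordinates, [atr g 1 0] replaces [atr g 0 0]; the angle changes by an integer. *)
Lemma O2of_mul f g : NAform f -> NAform g -> O2of (acomp f g) = O2of f *m O2of g.
Proof.
move=> [s [b [hf _]]] [t [c [hg dg]]].
rewrite (O2ofE hf) (O2ofE hg) O2mx_mul (@O2ofE _ (s (+) t) (b (+) c)) /= ?hf ?hg ?spmx_mul //.
rewrite mxDE spmx_mulv0; case: (b) => //.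
rewrite -[atr g 1 0](subrK (atr g 0 0)) mulrDr addrA addrAC [in LHS]O2mx_addz //.
by rewrite rpredM ?rpredX ?rpredN ?rpred1 // -opprB rpredN.
Qed.

Lemma O2of_surj (Q : 'M[R]_2) : Q^T *m Q = 1%:M -> exists f, NAform f /\ O2of f = Q.
Proof.
move=> /matrixP E; have := E 0 0; have := E 0 1; have := E 1 1.
rewrite !mulmx2E !mxE /= => h11 h01 h00.
have [a [ca sa]] : exists a, cos_turn a = Q 0 0 /\ sin_turn a = Q 1 0.
  by apply: angle_exists; rewrite !expr2.
set D := Q 0 0 * Q 1 1 - Q 0 1 * Q 1 0.
have hQ01 : Q 0 1 = - Q 1 0 * D.
  suff : Q 0 1 * (Q 0 0 * Q 0 0 + Q 1 0 * Q 1 0) + Q 1 0 * D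
         = Q 0 0 * (Q 0 0 * Q 0 1 + Q 1 0 * Q 1 1) by rewrite h00 h01; lra.
  by rewrite /D; ring.
have hQ11 : Q 1 1 = Q 0 0 * D.
  suff : Q 1 1 * (Q 0 0 * Q 0 0 + Q 1 0 * Q 1 0) - Q 0 0 * D
         = Q 1 0 * (Q 0 0 * Q 0 1 + Q 1 0 * Q 1 1) by rewrite h00 h01; lra.
  by rewrite /D; ring.
have [s hs] : exists s : bool, D = (-1) ^+ s.
  have : (D - 1) * (D + 1) = 0.
    suff -> : (D - 1) * (D + 1) = (Q 0 0 * Q 0 0 + Q 1 0 * Q 1 0) * (Q 0 1 * Q 0 1 + Q 1 1 * Q 1 1)
      - (Q 0 0 * Q 0 1 + Q 1 0 * Q 1 1) ^+ 2 - 1 by rewrite h00 h11 h01; ring.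
    by rewrite /D; ring.
  by move/eqP; rewrite mulf_eq0 subr_eq0 addr_eq0 => /orP [] /eqP; [exists false | exists true].
exists (Aff (\col_i a) (spmx s false)); split.
  by exists s, false; split => //; rewrite /= !mxE subrr rpred0.
rewrite (@O2ofE _ s false) //; apply/mx2P; rewrite !mxE /= ?hQ01 ?hQ11 -?ca -?sa ?hs //; ring.
Qed.

End OrthogonalGroup.

Section QuotientMetric.
Variable R : realType.
Local Notation aff := (aff R).
Local Notation inM := (@inM R).
Local Notation isint x := (x \is a Num.int).
Local Open Scope classical_set_scope.
Implicit Types (f g m : aff) (p q x y z : 'cV[R]_2).

Lemma enorm_ge0 z : 0 <= enorm z.
Proof. exact: sqrtr_ge0. Qed.

Lemma enorm_ge_coord0 z : `|z 0 0| <= enorm z.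
Proof. by rewrite enormE -sqrtr_sqr ler_wsqrtr // lerDl sqr_ge0. Qed.

Lemma enorm_diag (t : R) : enorm (\col_(i < 2) t) <= 2 * `|t|.
Proof.
rewrite enormE !mxE -[2 * _]ger0_norm ?mulr_ge0 // -sqrtr_sqr ler_wsqrtr //.
by rewrite exprMn real_normK ?num_real //; nra.
Qed.

Lemma odist_set_neq0 p q : [set enorm (p - app g q) | g in inM] !=set0.
Proof. by exists (enorm (p - app (aid R) q)), (aid R) => //; exact: inM_id. Qed.

Lemma odist_le p q m : inM m -> odist p q <= enorm (p - app m q).
Proof. by move=> hm; apply: ge_inf; [exists 0 => _ [g _ <-]; exact: enorm_ge0 | exists m]. Qed.

Lemma odist_lt p q (d : R) : odist p q < d -> exists m, inM m /\ enorm (p - app m q) < d.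
Proof. by move=> /(inf_lt (odist_set_neq0 p q)) [_ [m hm <-] h]; exists m. Qed.

(* Translating by the integer parts of [p - q] brings [q] within the unit square around [p]. *)
Lemma odist_le2 p q : odist p q <= 2.
Proof.
pose a : 'cV[R]_2 := \col_i (Num.floor (p i 0 - q i 0))%:~R.
have ha : inM (Aff a 1%:M).
  by apply/inME; split; [apply/mxOverP => i j; rewrite mxE intr_int | exists false; rewrite spmxFF].
apply: le_trans (odist_le p q ha) _; rewrite enormE /app /= mul1mx.
rewrite -[2]ger0_norm // -sqrtr_sqr ler_wsqrtr //.
have := floor_itv (p 0 0 - q 0 0); have := floor_itv (p 1 0 - q 1 0).
by rewrite !intrD !mulr1z !(mxBE, mxDE) !mxE => /andP [h1 h2] /andP [h3 h4]; nra.
Qed.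

Lemma supdist_set_has_sup f g :
  has_sup [set odist (app f x) (app g x) | x in [set: 'cV[R]_2]].
Proof.
split; first by exists (odist (app f 0) (app g 0)), 0.
by exists 2 => _ [x _ <-]; exact: odist_le2.
Qed.

Lemma supdist_ge f g x : odist (app f x) (app g x) <= supdist f g.
Proof. by apply: sup_upper_bound (supdist_set_has_sup f g) _ _; exists x. Qed.

Lemma supdist_le f g (c : R) : (forall x, odist (app f x) (app g x) <= c) -> supdist f g <= c.
Proof.
by move=> h; apply: ge_sup; [case: (supdist_set_has_sup f g) | move=> _ [x _ <-]; exact: h].
Qed.

Lemma half_int (a : R) : isint a -> 1/2 <= `|1/2 + a|.
Proof.
move=> /intrP [z ->]; have [hz|hz] := lerP 0 z.
- have : (0 : R) <= z%:~R by rewrite ler0z.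
  by move=> h; apply: le_trans (ler_norm _); lra.
- have h2 : (z%:~R : R) <= -1 by rewrite -mulrN1z ler_int; lia.
  by rewrite -normrN; apply: le_trans (ler_norm _); lra.
Qed.

(* With opposite signs, at a suitable point of the diagonal the first coordinates of [f] and of
   any [m \o g] would differ by a half-integer. *)
Lemma uniformly_close_NAform f g s b s' b' (d : R) :
  alin f = spmx s b -> alin g = spmx s' b' -> isint (atr g 0 0 - atr g 1 0) -> d < 1/2 ->
  (forall x, exists m, inM m /\ enorm (app f x - app m (app g x)) <= d) ->
  s = s' /\ exists2 k, isint k & `|atr f 0 0 - atr g 0 0 - k| <= d.
Proof.
move=> hf hg dg hd H; set c := b (+) b'.
have Hy y : exists m, inM m /\
    `|(atr f + spmx (s (+) s') c *m (y - atr g) - app m y) 0 0| <= d.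
  have [m [hm hdm]] := H (spmx s' b' *m (y - atr g)); exists m; split => //.
  have eg : app g (spmx s' b' *m (y - atr g)) = y.
    by rewrite /app hg mulmxA spmxK mul1mx addrC subrK.
  have ef : app f (spmx s' b' *m (y - atr g)) = atr f + spmx (s (+) s') c *m (y - atr g).
    by rewrite /app hf mulmxA spmx_mul.
  rewrite eg ef in hdm.
  exact: le_trans (enorm_ge_coord0 _) hdm.
have hss : s (+) s' = false.
  case E: (s (+) s') => //; exfalso; rewrite E in Hy.
  pose w := (atr f 0 0 + (if c then atr g 1 0 else atr g 0 0) + 1/2) / 2.
  have [m [/inME [/mxOverP hm [c' hc']] hdm]] := Hy (\col_(i < 2) w).
  move: hdm; rewrite /app hc' !(mxBE, mxDE) !spmx_mulv0 !(mxBE, mxDE) !mxE /= expr1 expr0 mul1r.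
  have := half_int (hm 0 0); rewrite ler_normr ler_norml /w => /orP [] h /andP [h1 h2];
    by case: (c) (c') h1 h2 => [] [] /=; lra.
split; first by move: hss; case: (s); case: (s').
have [m [/inME [/mxOverP hm [c' hc']] hdm]] := Hy 0.
move: hdm; rewrite hss /app hc' mulmx0 addr0 sub0r mulmxN mxBE mxDE mxNE spmx_mulv0 expr0 mul1r.
case: (c) => hdm.
- exists (atr m 0 0 - (atr g 0 0 - atr g 1 0)); first by rewrite rpredB.
  suff -> : atr f 0 0 - atr g 0 0 - (atr m 0 0 - (atr g 0 0 - atr g 1 0))
            = atr f 0 0 - atr g 1 0 - atr m 0 0 by [].
  by ring.
- by exists (atr m 0 0).
Qed.

Lemma star_shift f g s b b' (t : R) :
  alin f = spmx s b -> alin g = spmx s b' ->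
  isint (atr f 0 0 - atr f 1 0) -> isint (atr g 0 0 - atr g 1 0) ->
  isint (atr f 0 0 - atr g 0 0 - t) ->
  exists m, inM m /\ forall x, app f x - app m (app g x) = \col_(i < 2) t.
Proof.
move=> hf hg df dg dt; set c := b (+) b'.
pose w := atr f - spmx false c *m atr g - \col_(i < 2) t.
exists (Aff w (spmx false c)); split.
- apply/inME; split; last by exists c.
  have e0 : w 0 0 = (atr f 0 0 - atr g 0 0 - t) + (if c then atr g 0 0 - atr g 1 0 else 0).
    rewrite !mxBE spmx_mulv0 mxE /= expr0 mul1r.
    by case: (c); ring.
  have e1 : w 1 0 = (atr f 0 0 - atr g 0 0 - t) - (atr f 0 0 - atr f 1 0)
                    + (if c then 0 else atr g 0 0 - atr g 1 0).
    rewrite !mxBE spmx_mulv1 mxE /= expr0 mul1r.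
    by case: (c); ring.
  apply/mxOverP => i j; rewrite (ord1 j); case: (ord2P i) => ->.
  + by rewrite e0; case: (c); rewrite /= ?addr0 //; apply: rpredD.
  + rewrite e1; case: (c); rewrite /= ?addr0; first by apply: rpredB.
    by apply: rpredD => //; apply: rpredB.
- move=> x; rewrite /app /= hf hg mulmxDr mulmxA spmx_mul.
  have -> : c (+) b' = b by rewrite /c -addbA addbb addbF.
  by apply/cv2P; rewrite /w !(mxBE, mxDE) mxE; lra.
Qed.

End QuotientMetric.

Section SymmetryGroup.
Variable R : realType.
Local Notation aff := (aff R).
Local Notation inM := (@inM R).
Local Notation isint x := (x \is a Num.int).
Implicit Types (f g : aff).

Lemma inSymE f : inSym f <-> NAform f.
Proof.
split; first by case=> /inNAE.
by move=> hf; split; [exact/inNAE | exact: NAform_isometry].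
Qed.

Lemma same_star_O2of f g : NAform f -> NAform g -> (same_star f g <-> O2of f = O2of g).
Proof.
move=> [s [b [hf df]]] [s' [b' [hg dg]]]; rewrite (O2ofE hf) (O2ofE hg); split.
- move=> hs.
  have H x : exists m, inM m /\ enorm (app f x - app m (app g x)) <= 0.
    have [m [hm ->]] := hs x; exists m; split => //.
    by rewrite subrr enormE !mxE expr0n /= addr0 sqrtr0.
  have h0 : (0 : R) < 1/2 by lra.
  have [<- [k hk hle]] := uniformly_close_NAform hf hg dg h0 H.
  have -> : atr f 0 0 = atr g 0 0 + k by move: hle; rewrite normr_le0 subr_eq0 => /eqP <-; ring.
  exact: O2mx_addz.
- move=> /matrixP E; have := E 0 0; have := E 0 1; have := E 1 0; have := E 1 1.
  rewrite !mxE /= => e11 e10 e01 e00.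
  have hss : s = s'.
    have := cos2Dsin2_turn (atr f 0 0); rewrite -e00 in e11; rewrite -e10 in e01.
    by case: (s) (s') e11 e01 => [] [] //= e11 e01; rewrite ?expr0 ?expr1 in e11 e01; nra.
  subst s'.
  have hi : isint (atr f 0 0 - atr g 0 0 - 0).
    rewrite subr0; apply: cos_turn_eq1; rewrite cos_turnD cos_turnN sin_turnN e00 e10.
    by have := cos2Dsin2_turn (atr g 0 0); rewrite !expr2; lra.
  have [m [hm hm']] := star_shift hf hg df dg hi.
  move=> x; exists m; split => //; apply/eqP; rewrite -subr_eq0 hm'.
  by apply/eqP/matrixP => i j; rewrite !mxE.
Qed.

Lemma O2of_continuous f : NAform f -> forall e : R, 0 < e ->
  exists2 d : R, 0 < d & forall g, NAform g -> supdist f g < d ->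
    forall i j, `|O2of f i j - O2of g i j| < e.
Proof.
move=> [s [b [hf df]]] e he.
have [e' he' [e'1 e'e]] : exists2 e' : R, 0 < e' & e' <= 1 /\ e' <= e.
  by case: (lerP e 1) => h; [exists e | exists 1]; lra.
have hp := pi_gt0 R.
pose X := acos (1 - e' ^+ 2 / 16).
have hX : 0 < X by apply: acos_gt0; apply/andP; split; nra.
(* [d] is below [1/2] for [uniformly_close_NAform], and [2 pi d <= X] for [cos_sin_turn_close]. *)
pose d : R := Num.min (X / (2 * pi)) (1/4).
have hd0 : 0 < d by rewrite lt_min divr_gt0 ?mulr_gt0 //; lra.
have hd1 : d <= 1/4 by rewrite ge_min lexx orbT.
have hd2 : 2 * pi * d <= X.
  by rewrite -ler_pdivlMl ?mulr_gt0 // mulrC ge_min lexx.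
exists d => // g [s' [b' [hg dg]]] hsup.
have H x : exists m, inM m /\ enorm (app f x - app m (app g x)) <= d.
  have [m [hm hlt]] := odist_lt (le_lt_trans (supdist_ge f g x) hsup).
  by exists m; split => //; exact: ltW.
have hd : d < 1/2 by lra.
rewrite (O2ofE hf) (O2ofE hg).
have [<- [k hk hle]] := uniformly_close_NAform hf hg dg hd H.
set t := atr f 0 0 - atr g 0 0 - k in hle.
have -> : atr g 0 0 = atr f 0 0 - t + - k by rewrite /t; ring.
rewrite O2mx_addz ?rpredN //.
have he'1 : 0 < e' <= 1 by apply/andP.
have ht : 2 * pi * `|t| <= X by have := normr_ge0 t; nra.
have [hc hs] := cos_sin_turn_close (atr f 0 0) he'1 ht.
by move=> i j; rewrite !mxE; case: (val i == 0%N); case: (val j == 0%N);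
  rewrite // -?mulrBr -?mulNr ?normrM ?normrN ?normr_sign ?mul1r; lra.
Qed.

Lemma supdist_continuous f : NAform f -> forall e : R, 0 < e ->
  exists2 d : R, 0 < d & forall g, NAform g ->
    (forall i j, `|O2of f i j - O2of g i j| < d) -> supdist f g < e.
Proof.
move=> [s [b [hf df]]] e he.
pose eta : R := Num.min (e / 4) (1/4).
have heta0 : 0 < eta by rewrite lt_min; apply/andP; split; lra.
have heta1 : eta <= 1/4 by rewrite ge_min lexx orbT.
have heta2 : eta <= e / 4 by rewrite ge_min lexx.
have heta : 0 < eta <= 1/2 by apply/andP; split; lra.
have hg0 : 0 < 1 - cos_turn eta by have := cos_turn_lt1 heta; lra.
pose d : R := Num.min ((1 - cos_turn eta) / 2) (1/2).
have hd0 : 0 < d by rewrite lt_min; apply/andP; split; lra.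
have hd1 : d <= 1/2 by rewrite ge_min lexx orbT.
have hd2 : d <= (1 - cos_turn eta) / 2 by rewrite ge_min lexx.
exists d => // g [s' [b' [hg dg]]] H.
move: (H 0 0) (H 1 0) (H 0 1) (H 1 1) => {H}.
rewrite (O2ofE hf) (O2ofE hg) !mxE /= !ltr_norml.
move=> /andP [a1 a2] /andP [b1 b2] /andP [c1 c2] /andP [e1 e2].
have cf := cos2Dsin2_turn (atr f 0 0); have cg := cos2Dsin2_turn (atr g 0 0).
have hss : s = s'.
  move: c1 c2 e1 e2; case: (s); case: (s') => //=; rewrite ?expr0 ?expr1 => c1 c2 e1 e2;
    exfalso; clear -a1 a2 b1 b2 c1 c2 e1 e2 cf hd1; nra.
subst s'.
have hcc : cos_turn eta < cos_turn (atr f 0 0 - atr g 0 0).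
  rewrite cos_turnD cos_turnN sin_turnN; nra.
have [k hk] := cos_turn_gt_near heta hcc.
have hki : isint (atr f 0 0 - atr g 0 0 - (atr f 0 0 - atr g 0 0 - k%:~R)).
  by rewrite (_ : _ - _ = k%:~R) ?intr_int //; ring.
have [m [hm hdiff]] := star_shift hf hg df dg hki.
set t := atr f 0 0 - atr g 0 0 - k%:~R in hk hdiff.
apply: (@le_lt_trans _ _ (2 * `|t|)); last by lra.
apply: supdist_le => x; apply: le_trans (odist_le _ _ hm) _.
by rewrite hdiff; exact: enorm_diag.
Qed.

End SymmetryGroup.

Theorem lemma14 (R : realType) :
  (* (1) Sym(M) is isomorphic to O(2) as a Lie group (topological group iso) *)
  (exists F : aff R -> 'M[R]_2,
     [/\ forall f : aff R, inSym f -> (F f)^T *m F f = 1%:M,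
         forall f g : aff R, inSym f -> inSym g -> (same_star f g <-> F f = F g),
         forall Q : 'M[R]_2, Q^T *m Q = 1%:M -> exists f : aff R, inSym f /\ F f = Q &
         forall f g : aff R, inSym f -> inSym g -> F (acomp f g) = F f *m F g] /\
     (forall f : aff R, inSym f -> forall e : R, 0 < e ->
           (exists2 d : R, 0 < d & forall g : aff R, inSym g -> supdist f g < d ->
             forall i j, `|F f i j - F g i j| < e)) /\
        (
         forall f : aff R, inSym f -> forall e : R, 0 < e ->
           (exists2 d : R, 0 < d & forall g : aff R, inSym g ->
             (forall i j, `|F f i j - F g i j| < d) -> supdist f g < e))) /\
  (* (2) Sym(M) = Aff(M) *)
  (forall f : aff R, inNA f -> isometry_star f) /\
  (* (3) Omega maps {idt, (-I)_*} isomorphically onto Out(M) *)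
  (inNA (aminusI R) /\
   ~ out_equiv (conjb (aminusI R)) id /\
   forall alpha : aff R -> aff R, is_autM alpha ->
     out_equiv alpha id \/ out_equiv alpha (conjb (aminusI R))).
Proof.
split.
  exists (@O2of R); split; [split | split].
  - by move=> f /inSymE; exact: O2of_orth.
  - by move=> f g /inSymE hf /inSymE hg; exact: same_star_O2of.
  - by move=> Q /O2of_surj [f [/inSymE hf <-]]; exists f.
  - by move=> f g /inSymE hf /inSymE hg; exact: O2of_mul.
  - move=> f /inSymE hf e he; have [d hd H] := O2of_continuous hf he.
    by exists d => // g /inSymE; exact: H.
  - move=> f /inSymE hf e he; have [d hd H] := supdist_continuous hf he.
    by exists d => // g /inSymE; exact: H.
split; first by move=> f /inNAE; exact: NAform_isometry.
split; first exact: inNA_aminusI.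
split; first exact: aminusI_not_inner.
by move=> alpha; exact: autM_inner_or_aminusI.
Qed.
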